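(* Let $G$ be the graph with vertex set $\mathbb{Z}_{16}$ in which $i$ and $j$ are adjacent iff $i-j\in\{\pm1,\pm2,\pm4\}\pmod{16}$, and let $H$ be the graph with vertex set $\mathbb{Z}_{16}$ in which $i$ and $j$ are adjacent iff $i-j\in\{\pm1,\pm3,\pm4\}\pmod{16}$. Then $G$ and $H$ are distinguishable by EB-1WL but not distinguishable by NC-1WL.
   Context: All graphs are finite, simple and undirected; $N(v)$ denotes the neighborhood of $v$. An ordered edge of $G=(V,E)$ is a pair $(u,v)$ with $\{u,v\}\in E$. EB-1WL coloring: $\mathrm{eb}^{(0)}(G,(u,v))=1$ for every ordered edge, and $\mathrm{eb}^{(\ell+1)}(G,(u,v)) = \big(\mathrm{eb}^{(\ell)}(G,(u,v)),\ \{\!\{\mathrm{eb}^{(\ell)}(G,(u,x)) : x\in N(u)\}\!\},\ \{\!\{(\mathrm{eb}^{(\ell)}(G,(u,y)),\mathrm{eb}^{(\ell)}(G,(v,y))) : y\in N(u)\cap N(v)\}\!\},\ \{\!\{\mathrm{eb}^{(\ell)}(G,(v,z)) : z\in N(v)\}\!\}\big)$. $\mathrm{eb}^{(\ell)}(G)$ is the multiset of $\mathrm{eb}^{(\ell)}(G,(u,v))$ over all ordered edges. Graphs are distinguishable by EB-1WL if they have different numbers of vertices or there is $\ell$ with $\mathrm{eb}^{(\ell)}(G)\neq\mathrm{eb}^{(\ell)}(H)$. NC-1WL coloring of vertices: $\mathrm{nc}^{(0)}(G,v)=1$ and $\mathrm{nc}^{(\ell+1)}(G,v)=\big(\mathrm{nc}^{(\ell)}(G,v),\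 \{\!\{\mathrm{nc}^{(\ell)}(G,u): u\in N(v)\}\!\},\ \{\!\{(\mathrm{nc}^{(\ell)}(G,u),\mathrm{nc}^{(\ell)}(G,w)) : u,w\in N(v),\ \{u,w\}\in E\}\!\}\big)$. $\mathrm{nc}^{(\ell)}(G)=\{\!\{\mathrm{nc}^{(\ell)}(G,v): v\in V\}\!\}$; graphs are distinguishable by NC-1WL if there is $\ell$ with $\mathrm{nc}^{(\ell)}(G)\neq\mathrm{nc}^{(\ell)}(H)$. Colors are nested tuples/multisets, comparable across graphs. *)

From HB Require Import structures.
From mathcomp Require Import all_boot all_order.
From mathcomp Require Import finmap multiset.

Set Implicit Arguments.
Unset Strict Implicit.
Unset Printing Implicit Defensive.
Local Open Scope mset_scope.
Local Open Scope nat_scope.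

Definition simple_graph (V : finType) (adj : rel V) :=
  symmetric adj /\ irreflexive adj.

Definition nbrs (V : finType) (adj : rel V) (v : V) : seq V :=
  [seq x <- enum V | adj v x].

(* Colours of round l live in the
   choiceType ebCol l (resp. ncCol l); multisets are finmap's {mset _},
   so equality of colours is Leibniz equality and is comparable across graphs. *)
Fixpoint ebCol (l : nat) : choiceType :=
  match l with
  | 0 => unit
  | l'.+1 => (ebCol l' * {mset ebCol l'} * {mset (ebCol l' * ebCol l')%type}
              * {mset ebCol l'})%type
  end.

(* EB-1WL colour of the ordered pair (u,v) (only used on ordered edges). *)
Fixpoint eb (V : finType) (adj : rel V) (l : nat) (u v : V) : ebCol l :=
  match l return ebCol l with
  | 0 => tt
  | l'.+1 =>
    (eb adj l' u v,
     seq_mset [seq eb adj l' u x | x <- nbrs adj u],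
     seq_mset [seq (eb adj l' u y, eb adj l' v y)
                 | y <- nbrs adj u & adj v y],
     seq_mset [seq eb adj l' v z | z <- nbrs adj v])
  end.

Definition ordered_edges (V : finType) (adj : rel V) : seq (V * V) :=
  [seq e <- [seq (u, v) | u <- enum V, v <- enum V] | adj e.1 e.2].

Definition ebGraph (V : finType) (adj : rel V) (l : nat) : {mset ebCol l} :=
  seq_mset [seq eb adj l e.1 e.2 | e <- ordered_edges adj].

Definition EB_distinguishable (V W : finType) (adjG : rel V) (adjH : rel W) :=
  #|V| <> #|W| \/ exists l, ebGraph adjG l <> ebGraph adjH l.

Fixpoint ncCol (l : nat) : choiceType :=
  match l with
  | 0 => unit
  | l'.+1 => (ncCol l' * {mset ncCol l'} * {mset (ncCol l' * ncCol l')%type})%type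
  end.

Fixpoint nc (V : finType) (adj : rel V) (l : nat) (v : V) : ncCol l :=
  match l return ncCol l with
  | 0 => tt
  | l'.+1 =>
    (nc adj l' v,
     seq_mset [seq nc adj l' u | u <- nbrs adj v],
     seq_mset [seq (nc adj l' p.1, nc adj l' p.2)
                 | p <- [seq p <- [seq (u, w) | u <- nbrs adj v, w <- nbrs adj v]
                         | adj p.1 p.2]])
  end.

Definition ncGraph (V : finType) (adj : rel V) (l : nat) : {mset ncCol l} :=
  seq_mset [seq nc adj l v | v <- enum V].

Definition NC_distinguishable (V W : finType) (adjG : rel V) (adjH : rel W) :=
  exists l, ncGraph adjG l <> ncGraph adjH l.

Definition diff16 (i j : 'I_16) : nat := (i + 16 - j) %% 16.

Definition adjG16 : rel 'I_16 := fun i j => diff16 i j \in [:: 1; 15; 2; 14; 4; 12].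
Definition adjH16 : rel 'I_16 := fun i j => diff16 i j \in [:: 1; 15; 3; 13; 4; 12].

From mathcomp Require Import all_boot all_order.
From mathcomp Require Import finmap multiset.

Set Implicit Arguments.
Unset Strict Implicit.
Unset Printing Implicit Defensive.
Local Open Scope mset_scope.

(* If every vertex has degree d and its neighbourhood spans t ordered edges,
   NC-1WL never splits the colouring: by induction all vertices share one
   colour per round, determined by d and t alone.  G and H both have 16
   vertices, all of degree 6 with 6 edges (12 ordered ones) among their
   neighbours, so NC-1WL cannot tell them apart.  One round of EB-1WL, on the
   other hand, records for each edge the number of common neighbours of its
   endpoints: every edge of H lies in exactly two triangles, whereas G has
   edges lying in three. *)

(* [insub] on ordinals goes through the opaque [idP]; this variant keeps the
   bound proof transparent, so that [enum 'I_n] can be evaluated by [vm_compute]. *)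
Definition ord_of_nat n i : option 'I_n :=
  (if i < n as b return (i < n) = b -> option 'I_n
   then fun lt_in => Some (Ordinal lt_in) else fun _ => None) (erefl (i < n)).

Lemma ord_of_natE n : ord_of_nat n =1 insub.
Proof.
move=> i; rewrite /ord_of_nat; move: (erefl (i < n)).
case: {2 3}(i < n) => in_n; last by rewrite insubN ?in_n.
by rewrite insubT; congr Some; apply: val_inj.
Qed.

Lemma enum_ordE n : enum 'I_n = pmap (ord_of_nat n) (iota 0 n).
Proof. by rewrite (eq_pmap (ord_of_natE n)) enumT unlock. Qed.

Lemma all_enumP (V : finType) (P : pred V) : all P (enum V) -> forall v, P v.
Proof. by move=> /allP allP v; apply: allP; rewrite mem_enum. Qed.

Lemma map_const_nseq (A B : Type) (f : A -> B) (c : B) (s : seq A) :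
  f =1 (fun=> c) -> map f s = nseq (size s) c.
Proof. by move=> fc; elim: s => //= x s ->; rewrite fc. Qed.
Arguments map_const_nseq {A B f c s}.

Lemma simple_graphP (V : finType) (adj : rel V) :
  all (fun u => all (fun v => adj u v == adj v u) (enum V)) (enum V) ->
  all (fun v => ~~ adj v v) (enum V) -> simple_graph adj.
Proof.
move=> /all_enumP adj_sym /all_enumP adj_irr; split=> [u v|v].
  by apply/eqP; exact: all_enumP (adj_sym u) v.
exact/negbTE/adj_irr.
Qed.

Definition common_nbrs (V : finType) (adj : rel V) (u v : V) : seq V :=
  [seq y <- nbrs adj u | adj v y].

Lemma size_eb1_common (V : finType) (adj : rel V) u v :
  size ((eb adj 1 u v).1.2 : {mset (unit * unit)%type}) = size (common_nbrs adj u v).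
Proof. by rewrite /= (perm_size (perm_eq_seq_mset _)) size_map. Qed.

Lemma ebGraph1_count_common (V W : finType) (adjG : rel V) (adjH : rel W) k :
  ebGraph adjG 1 = ebGraph adjH 1 ->
  count (fun e => size (common_nbrs adjG e.1 e.2) == k) (ordered_edges adjG) =
  count (fun e => size (common_nbrs adjH e.1 e.2) == k) (ordered_edges adjH).
Proof.
move=> /eq_seq_msetP /permP.
move/(_ (fun c : ebCol 1 => size (c.1.2 : {mset (unit * unit)%type}) == k)).
have count_common (U : finType) (adj : rel U) e :=
  congr1 (eqn^~ k) (size_eb1_common adj e.1 e.2).
by rewrite !count_map !(eq_count (count_common _ _)).
Qed.

Section NC1WL.

Variable V : finType.
Variable adj : rel V.

Definition nbr_edges (v : V) : seq (V * V) :=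
  [seq p <- [seq (u, w) | u <- nbrs adj v, w <- nbrs adj v] | adj p.1 p.2].

Fixpoint nc_uniform (d t l : nat) : ncCol l :=
  match l return ncCol l with
  | 0 => tt
  | l'.+1 => let c := nc_uniform d t l' in
             (c, seq_mset (nseq d c), seq_mset (nseq t (c, c)))
  end.

Variables d t : nat.
Hypothesis size_nbrs : forall v, size (nbrs adj v) = d.
Hypothesis size_nbr_edges : forall v, size (nbr_edges v) = t.

Lemma nc_uniformE l v : nc adj l v = nc_uniform d t l.
Proof.
elim: l v => [|l IHl] v //=.
rewrite IHl (map_const_nseq IHl) size_nbrs.
set c := nc_uniform d t l.
by rewrite (map_const_nseq (c := (c, c))) ?size_nbr_edges // => p; rewrite !IHl.
Qed.

Lemma ncGraph_uniform l : ncGraph adj l = seq_mset (nseq #|V| (nc_uniform d t l)).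
Proof. by rewrite /ncGraph (map_const_nseq (nc_uniformE l)) -cardE. Qed.

End NC1WL.

Lemma ncGraph_uniformP (V : finType) (adj : rel V) d t l :
  all (fun v => (size (nbrs adj v) == d) && (size (nbr_edges adj v) == t)) (enum V) ->
  ncGraph adj l = seq_mset (nseq #|V| (nc_uniform d t l)).
Proof.
move=> /all_enumP uni; apply: ncGraph_uniform => v.
  by case/andP: (uni v) => /eqP.
by case/andP: (uni v) => _ /eqP.
Qed.

Lemma ncGraph_eq_uniform (V W : finType) (adjG : rel V) (adjH : rel W) d t :
  #|V| = #|W| ->
  all (fun v => (size (nbrs adjG v) == d) && (size (nbr_edges adjG v) == t)) (enum V) ->
  all (fun w => (size (nbrs adjH w) == d) && (size (nbr_edges adjH w) == t)) (enum W) ->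
  forall l, ncGraph adjG l = ncGraph adjH l.
Proof.
move=> card_VW uniG uniH l.
by rewrite (ncGraph_uniformP l uniG) (ncGraph_uniformP l uniH) card_VW.
Qed.

Theorem mainTheorem4 :
  simple_graph adjG16 /\ simple_graph adjH16 /\
  EB_distinguishable adjG16 adjH16 /\ ~ NC_distinguishable adjG16 adjH16.
Proof.
split; first by apply: simple_graphP; rewrite enum_ordE; vm_compute.
split; first by apply: simple_graphP; rewrite enum_ordE; vm_compute.
split.
  right; exists 1 => /(ebGraph1_count_common 3).
  by rewrite /ordered_edges /common_nbrs /nbrs !enum_ordE; vm_compute.
case=> l; apply; apply: (ncGraph_eq_uniform (d := 6) (t := 12)) => //;
  by rewrite /nbr_edges /nbrs enum_ordE; vm_compute.
Qed.
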